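(* Let $n\ge2$, $x\in\{0,\dots,n-1\}$ and $k:=n+1+x$. Then \[g_n(x):=\mathbb P(I_n=1\mid X=x)=\min\Bigl\{1,\max\Bigl\{0,\frac{V_n(k)}{N(k,n)}\Bigr\}\Bigr\},\] and consequently $\mathbb P(I_n=1)=\sum_{x=0}^{n-1}\binom{n-1}{x}2^{-(n-1)}g_n(x)$.
   Context: Let $\mathcal X=\{A,B,C,D\}$ and let $(X_i)_{i\ge1}$ be the first-order Markov chain on $\mathcal X$ with $\mathbb P(X_1=x)=1/4$ for all $x$ and transitions: from $A$ to $A$ or $C$ w.p. $1/2$ each; from $B$ to $B$ or $D$ w.p. $1/2$ each; from $C$ and from $D$ to each of $A,B,C,D$ w.p. $1/4$. A nonempty string is admissible if all consecutive transitions have positive probability; $\mathcal A$ is the set of admissible nonempty strings; $K(u):=-\log_2\mathbb P(X_1^m=u)$ for $u=x_1^m\in\mathcal A$. $S_k:=\#\{u\in\mathcal A:K(u)=k\}$, $N(k,\ell):=\#\{u\in\mathcal A$ of length $\ell$ with $K(u)=k\}$, $W_{<n}(k):=\sum_{\ell=1}^{n-1}N(k,\ell)$, $V_n(k):=S_k/2-W_{<n}(k)$. Shortlex source code $C$: order nonempty binary strings by length then lexicographically as $b_1,b_2,\dots$; order $\mathcal A$ as $u_1,u_2,\dots$ by increasing $K$, then increasing length, then lexicographically with $A<B<C<D$; set $C(u_j):=b_j$. Let $K_n:=K(X_1^n)$, $L_n:=|C(X_1^n)|$, $I_n:=\mathbf 1\{L_n=K_n-1\}$, and $X:=\#\{i\in\{1,\dots,n-1\}:X_i\in\{C,D\}\}$.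 *)

(* All probabilities are exact rationals (they are dyadic). *)
From mathcomp Require Import all_boot all_order all_algebra.
Set Implicit Arguments. Unset Strict Implicit. Unset Printing Implicit Defensive.
Import Order.TTheory GRing.Theory Num.Theory.
Local Open Scope ring_scope.

(* Alphabet {A,B,C,D} encoded as 'I_4 with A=0, B=1, C=2, D=3;
   the lexicographic letter order A<B<C<D is the order on 'I_4. *)
Definition letter := 'I_4.
Definition isC_or_D (a : letter) : bool := (2 <= val a)%N.

Definition trans (a b : letter) : rat :=
  match val a with
  | 0%N => if (val b == 0%N) || (val b == 2%N) then 1 / 2 else 0
  | 1%N => if (val b == 1%N) || (val b == 3%N) then 1 / 2 else 0
  | _ => 1 / 4
  end.

Fixpoint pathprob (a : letter) (s : seq letter) : rat :=
  match s with
  | [::] => 1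
  | b :: s' => trans a b * pathprob b s'
  end.

Definition prob (u : seq letter) : rat :=
  match u with
  | [::] => 0
  | a :: s => (1 / 4) * pathprob a s
  end.

Definition admissible (u : seq letter) : bool :=
  match u with
  | [::] => false
  | a :: s => path (fun x y => 0 < trans x y) a s
  end.

(* K(u) = -log2 P(u).  Statements "K(u) = k" are expressed exactly as P(u) = 2^-k,
   and K(v) < K(u) as P(v) > P(u). *)
Definition Kis (u : seq letter) (k : nat) : bool := prob u == (2 ^+ k)^-1.

Definition Ncount (k l : nat) : nat :=
  #|[set v : l.-tuple letter | admissible v && Kis v k]|.

(* S_k = #{u in A : K(u) = k}; every admissible u has K(u) >= |u| + 1,
   so only lengths l <= k contribute (l = 0 contributes 0). *)
Definition Scount (k : nat) : nat := \sum_(l < k.+1) Ncount k l.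

Definition Wlt (n k : nat) : nat := \sum_(1 <= l < n) Ncount k l.

Definition Vn (n k : nat) : rat := (Scount k)%:R / 2 - (Wlt n k)%:R.

Fixpoint lexlt (s t : seq letter) : bool :=
  match s, t with
  | a :: s', b :: t' => ((val a) < (val b))%N || ((a == b) && lexlt s' t')
  | _, _ => false
  end.

Definition precedes (v u : seq letter) : bool :=
  (prob u < prob v)
  || ((prob v == prob u)
      && (((size v < size u)%N) || ((size v == size u) && lexlt v u))).

(* Index j (1-based) of an admissible u in the ordering u_1, u_2, ... of A.
   If v precedes u then P(v) >= P(u) >= 4^-|u|, while P(v) <= 2^-(|v|+1),
   hence |v| < 2|u|; so counting over lengths l <= 2|u| counts all predecessors. *)
Definition rank (u : seq letter) : nat :=
  (\sum_(l < (2 * size u).+1)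
     #|[set v : l.-tuple letter | admissible v && precedes v u]|).+1.

(* b_j: the j-th nonempty binary string in shortlex order (0 < 1):
   the binary expansion of j+1 with its leading 1 removed. *)
Definition bin_code (j : nat) : seq bool :=
  let m := trunc_log 2 j.+1 in
  [seq odd (j.+1 %/ 2 ^ (m.-1 - i)) | i <- iota 0 m].

Definition code (u : seq letter) : seq bool := bin_code (rank u).
Definition codelen (u : seq letter) : nat := size (code u).

(* I = 1{L = K - 1}, i.e. K = L + 1, i.e. P(u) = 2^-(L+1). *)
Definition Iev (u : seq letter) : bool := Kis u (codelen u).+1.

Definition Xcnt (u : seq letter) : nat := count isC_or_D (take (size u).-1 u).

Definition chainP (n : nat) (E : pred (n.-tuple letter)) : rat :=
  \sum_(u : n.-tuple letter | E u) prob u.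
Arguments chainP n E : clear implicits.

Definition condP (n : nat) (E F : pred (n.-tuple letter)) : rat :=
  chainP n (fun u => E u && F u) / chainP n F.
Arguments condP n E F : clear implicits.

Definition g (n x : nat) : rat :=
  condP n (fun u => Iev u) (fun u => Xcnt u == x).

From mathcomp Require Import all_boot all_order all_algebra.
From mathcomp Require Import zify ring.
Import Order.TTheory GRing.Theory Num.Theory.
Set Implicit Arguments. Unset Strict Implicit. Unset Printing Implicit Defensive.
Local Open Scope ring_scope.

(* A transition out of A or B costs one bit and a transition out of C or D two,
   so an admissible word of length n has K = n + 1 + X: conditioning on X = x
   is conditioning on K = k := n + 1 + x, under which the N(k,n) words are
   equally likely.  The word of rank j gets a codeword of length
   floor(log2 (j+1)), so I = 1 iff 2^(k-1) <= rank + 1 < 2^k.  Counting the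
   words of smaller K, of equal K and smaller length, and of the same block
   but lexicographically smaller gives
   rank u = sum_{k'<k} S_k' + W_{<n}(k) + #(lex predecessors of u) + 1,
   while the recursion for the numbers of words of a given length and
   exponent gives sum_{k'<k} S_k' + S_k/2 + 2 = 2^k.  Hence I = 1 exactly on
   the first V_n(k) words of the block in lexicographic order, i.e. on
   min(N(k,n), max(0, V_n(k))) of them.  The second claim is the law of
   total probability with P(X = x) = C(n-1,x) 2^-(n-1). *)

Definition edge (a b : letter) : bool := 0 < trans a b.

Definition cost (a : letter) : nat := if isC_or_D a then 2 else 1.

Definition pathexp (a : letter) (s : seq letter) : nat :=
  (size s + count isC_or_D (belast a s))%N.

Lemma edgeE a b : edge a b = [|| isC_or_D a, val b == val a | val b == (val a).+2].
Proof.
by case: a => [[|[|[|[|?]]]] ?] //; case: b => [[|[|[|[|?]]]] ?] //; vm_compute.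
Qed.

Lemma trans_edge a b : trans a b = if edge a b then (2 ^+ cost a)^-1 else 0.
Proof.
by case: a => [[|[|[|[|?]]]] ?] //; case: b => [[|[|[|[|?]]]] ?] //; vm_compute.
Qed.

Lemma pathexp_cons a b s : pathexp a (b :: s) = (cost a + pathexp b s)%N.
Proof. by rewrite /pathexp /cost /=; case: (isC_or_D a) => /=; lia. Qed.

Lemma pathprobE a s :
  pathprob a s = if path edge a s then (2 ^+ pathexp a s)^-1 else 0.
Proof.
elim: s a => [|b s IH] a /=; first by rewrite /pathexp /= expr0 invr1.
rewrite IH trans_edge pathexp_cons.
case: (edge a b); case: (path edge b s); rewrite ?mulr0 ?mul0r //=.
by rewrite -invfM -exprD.
Qed.

Lemma probE a s :
  prob (a :: s) = if path edge a s then (2 ^+ (pathexp a s + 2))^-1 else 0.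
Proof.
rewrite /prob pathprobE; case: path; rewrite ?mulr0 //.
by rewrite exprD invfM mulrC; congr (_ * _); vm_compute.
Qed.

Lemma eq_invexp2 (i j : nat) : ((2 ^+ i)^-1 == (2 ^+ j)^-1 :> rat) = (i == j).
Proof. by rewrite (can_eq (@invrK _)) -!natrX eqr_nat eqn_exp2l. Qed.

Lemma lt_invexp2 (i j : nat) : ((2 ^+ i)^-1 < (2 ^+ j)^-1 :> rat) = (j < i)%N.
Proof. by rewrite ltf_pV2 ?posrE ?exprn_gt0 // ltr_eXn2l. Qed.

Lemma admissible_cons a s : admissible (a :: s) = path edge a s.
Proof. by []. Qed.

Lemma admissible_prob v : admissible v -> exists j, prob v = (2 ^+ j)^-1.
Proof.
by case: v => [|a s] //; rewrite admissible_cons => h; exists (pathexp a s + 2)%N; rewrite probE h.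
Qed.

Lemma prob_not_admissible v : ~~ admissible v -> prob v = 0.
Proof. by case: v => [|a s] //; rewrite admissible_cons probE => /negbTE ->. Qed.

Lemma admissible_Kis_cons a s k :
  admissible (a :: s) && Kis (a :: s) k = path edge a s && (pathexp a s + 2 == k)%N.
Proof. by rewrite /Kis probE admissible_cons; case: path => //=; apply: eq_invexp2. Qed.

Section CountingWords.
Local Open Scope nat_scope.

Lemma card_set_sumb (T : finType) (P : pred T) : #|[set v | P v]| = \sum_(v : T) P v.
Proof. by rewrite -sum1_card big_mkcond /=; apply: eq_bigr => v _; rewrite inE; case: (P v). Qed.

Lemma sum_tuple_cons (T : finType) m (F : m.+1.-tuple T -> nat) :
  \sum_(v : m.+1.-tuple T) F v = \sum_(a : T) \sum_(s : m.-tuple T) F [tuple of a :: s].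
Proof.
rewrite pair_big /= (reindex (fun p : T * m.-tuple T => [tuple of p.1 :: p.2])) //=.
exists (fun v : m.+1.-tuple T => (thead v, [tuple of behead v])).
  by move=> [a s] _ /=; rewrite theadE; congr pair; apply: val_inj.
by move=> v _ /=; rewrite [in RHS](tuple_eta v).
Qed.

Lemma sum_tuple0 (T : finType) (F : 0.-tuple T -> nat) : \sum_(v : 0.-tuple T) F v = F [tuple].
Proof. by rewrite (big_pred1 [tuple]) // => v; rewrite /= [v]tuple0; apply/esym/eqP. Qed.

Definition npaths (a : letter) m e :=
  \sum_(s : m.-tuple letter) (path edge a s && (pathexp a s == e)).

(* [nwords m e] = N(e+2, m+1) / 2 (see [NcountS]); the recursion splits on
   whether the first letter lies in {A,B} (one bit) or in {C,D} (two bits). *)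
Fixpoint nwords m e :=
  match m with
  | 0 => if e is 0 then 2 else 0
  | m'.+1 => match e with 0 => 0 | 1 => nwords m' 0 | e'.+2 => nwords m' e'.+1 + 2 * nwords m' e' end
  end.

Definition nfrom (a : letter) m e :=
  match m with
  | 0 => nat_of_bool (e == 0)
  | m'.+1 => if isC_or_D a then (if e is e'.+2 then 2 * nwords m' e' else 0)
             else (if e is e'.+1 then nwords m' e' else 0)
  end.

Lemma addn_eq_split d x e : (d + x == e) = (d <= e) && (x == e - d).
Proof. by apply/eqP/andP => [<-|[h /eqP->]]; [rewrite leq_addr addKn | rewrite subnKC]. Qed.

Lemma npaths_cons a m e :
  npaths a m.+1 e = \sum_(b : letter) (edge a b && (cost a <= e)) * npaths b m (e - cost a).
Proof.
rewrite /npaths sum_tuple_cons; apply: eq_bigr => b _ /=.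
case: (edge a b) => /=; last by rewrite mul0n big1.
case: (leqP (cost a) e) => h /=.
  by rewrite mul1n; apply: eq_bigr => s _; rewrite pathexp_cons addn_eq_split h.
rewrite mul0n big1 // => s _; rewrite pathexp_cons addn_eq_split leqNgt h /=.
by case: path.
Qed.

Lemma npathsE m a e : npaths a m e = nfrom a m e.
Proof.
elim: m a e => [|m IH] a e; first by rewrite /npaths sum_tuple0 /= /pathexp /= eq_sym.
rewrite npaths_cons (eq_bigr (fun b => (edge a b && (cost a <= e)) * nfrom b m (e - cost a))).
  rewrite !big_ord_recl big_ord0 !edgeE /cost.
  case: a => [[|[|[|[|?]]]] ?] //=; case: m {IH} => [|m] /=;
    case: e => [|[|[|e]]] //=; rewrite ?subSS ?subn0 /=; try lia; case: e => [|e] /=; lia.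
by move=> b _; rewrite IH.
Qed.

Lemma sum_nfrom m e : \sum_(a : letter) nfrom a m e = 2 * nwords m e.
Proof.
rewrite !big_ord_recl big_ord0 /=.
by case: m => [|m] /=; [case: e | case: e => [|[|e]] //=; lia].
Qed.

Lemma Ncount_sum k l : Ncount k l = \sum_(v : l.-tuple letter) (admissible v && Kis v k).
Proof. by rewrite /Ncount card_set_sumb. Qed.

Lemma Ncount0 k : Ncount k 0 = 0.
Proof. by rewrite Ncount_sum sum_tuple0. Qed.

Lemma NcountS k m : Ncount k m.+1 = (1 < k) * (2 * nwords m (k - 2)).
Proof.
rewrite Ncount_sum sum_tuple_cons.
rewrite (eq_bigr (fun a => (1 < k) * nfrom a m (k - 2))) => [|a _].
  case: (ltnP 1 k) => hk; last by rewrite big1.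
  by rewrite mul1n -sum_nfrom; apply: eq_bigr => a _; rewrite mul1n.
rewrite -npathsE /npaths; case: (ltnP 1 k) => hk.
  rewrite mul1n; apply: eq_bigr => s _ /=; rewrite admissible_Kis_cons.
  by congr (_ && _); rewrite -[RHS](eqn_add2r 2) subnK.
rewrite mul0n big1 // => s _ /=; rewrite admissible_Kis_cons.
by case: path => //=; case: eqP => //; lia.
Qed.

Lemma nwordsS m e :
  nwords m.+1 e = (if 0 < e then nwords m e.-1 else 0) + (if 1 < e then 2 * nwords m e.-2 else 0).
Proof. by case: e => [|[|e]] //=; rewrite addn0. Qed.

Lemma nwords_small m e : e < m -> nwords m e = 0.
Proof.
elim: m e => [|m IH] e // h; rewrite nwordsS.
by case: ifP => h1; case: ifP => h2; rewrite ?IH //; lia.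
Qed.

Lemma nwords_diag m x : nwords m (m + x) = 2 ^ x.+1 * 'C(m, x).
Proof.
elim: m x => [|m IH] x; first by case: x => [|x] //=; rewrite muln0.
rewrite nwordsS addSn /= IH; case: x => [|x].
  by rewrite addn0 bin0; case: m {IH} => [|m] //; rewrite nwords_small.
by rewrite addnS /= IH binS expnS; ring.
Qed.

Lemma Ncount_eq0 k l : k <= l -> Ncount k l = 0.
Proof.
case: l => [|m] h; first by rewrite Ncount0.
by rewrite NcountS; case: (ltnP 1 k) => hk //=; rewrite nwords_small ?muln0 //; lia.
Qed.

Definition halfS e := \sum_(m < e.+1) nwords m e.

Lemma halfS_rec e : halfS e.+2 = halfS e.+1 + 2 * halfS e.
Proof.
rewrite /halfS big_ord_recl /= add0n.
rewrite (eq_bigr (fun m : 'I_e.+2 => nwords m e.+1 + 2 * nwords m e)) // big_split /=.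
congr (_ + _); rewrite -big_distrr /=; congr (_ * _).
by rewrite big_ord_recr (@nwords_small e.+1 e) //= addn0.
Qed.

Lemma halfS_add e : halfS e + halfS e.+1 = 2 ^ e.+2.
Proof.
elim: e => [|e IH]; first by rewrite /halfS !big_ord_recr !big_ord0.
by rewrite (halfS_rec e) expnS -IH; lia.
Qed.

Lemma ScountE k : Scount k = (1 < k) * (2 * halfS (k - 2)).
Proof.
rewrite /Scount big_ord_recl Ncount0 add0n.
rewrite (eq_bigr (fun m : 'I_k => (1 < k) * (2 * nwords m (k - 2)))) => [|i _]; last by rewrite NcountS.
case: (ltnP 1 k) => hk /=; last by rewrite big1.
rewrite (eq_bigr (fun m : 'I_k => 2 * nwords m (k - 2))) => [|i _]; last by rewrite mul1n.
rewrite mul1n -big_distrr /=; congr (_ * _).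
case: k hk => [|[|e]] // _; rewrite /halfS /= subn2 /=.
by rewrite big_ord_recr (@nwords_small e.+1 e) //= addn0.
Qed.

Lemma sum_Scount_lt k : 2 <= k -> \sum_(k' < k) Scount k' + halfS (k - 2) + 2 = 2 ^ k.
Proof.
elim: k => [|k IH] //; case: k IH => [|[|k]] IH _ //.
  by rewrite !big_ord_recr big_ord0 !ScountE /halfS !big_ord_recr big_ord0.
rewrite big_ord_recr /= ScountE /=.
have := IH isT; rewrite !subn2 /= => hI.
by have := halfS_add k => hS; rewrite expnS; lia.
Qed.

Lemma Ncount_level n x : 0 < n -> Ncount (n + 1 + x) n = 2 ^ (x + 2) * 'C(n.-1, x).
Proof.
case: n => [|m] // _; rewrite NcountS.
have -> : m.+1 + 1 + x - 2 = m + x by lia.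
rewrite nwords_diag (_ : 1 < m.+1 + 1 + x); last by lia.
by rewrite mul1n addn2 !expnS; ring.
Qed.

End CountingWords.

Section RankInTotalOrder.
Local Open Scope nat_scope.

Lemma sum_ltn_minn c N : \sum_(0 <= i < N) (i < c) = minn c N.
Proof.
elim: N => [|N IH]; first by rewrite big_geq // minn0.
by rewrite big_nat_recr //= IH; case: (ltnP N c) => h /=; lia.
Qed.

Variables (T : finType) (B : pred T) (r : rel T).
Hypothesis r_irr : irreflexive r.
Hypothesis r_trans : transitive r.
Hypothesis r_total : forall x y, x != y -> r x y || r y x.

Let precount u := #|[set v | B v && r v u]|.

Lemma precount_lt u w : B u -> r u w -> precount u < precount w.
Proof.
move=> Bu ruw; apply: proper_card; apply/properP; split.
  by apply/subsetP => v; rewrite !inE => /andP[-> rvu] /=; apply: r_trans rvu ruw.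
by exists u; rewrite !inE ?Bu ?ruw ?r_irr.
Qed.

Lemma precount_inj : {in B &, injective precount}.
Proof.
move=> u w Bu Bw e; apply/eqP; apply/negPn/negP => /r_total /orP[] h.
  by have := precount_lt Bu h; rewrite e ltnn.
by have := precount_lt Bw h; rewrite e ltnn.
Qed.

Lemma precount_bound u : B u -> precount u < #|B|.
Proof.
move=> Bu; rewrite -cardsE; apply: proper_card; apply/properP; split.
  by apply/subsetP => v; rewrite !inE => /andP[].
by exists u; rewrite !inE ?Bu // r_irr andbF.
Qed.

(* The ranks of the elements of B are exactly 0, ..., #|B| - 1. *)
Lemma count_rank_ltn c :
  \sum_(u : T) (B u && (#|[set v | B v && r v u]| < c)) = minn c #|B|.
Proof.
have -> : \sum_(u : T) (B u && (precount u < c)) = \sum_(i <- map precount (enum B)) (i < c).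
  rewrite big_map big_enum /=; apply: esym; rewrite big_mkcond /=.
  by apply: eq_bigr => u _; rewrite unfold_in; case: (B u).
have precount_uniq : uniq (map precount (enum B)).
  by rewrite map_inj_in_uniq ?enum_uniq // => u w; rewrite !mem_enum; apply: precount_inj.
have precount_sub : {subset map precount (enum B) <= iota 0 #|B|}.
  by move=> i /mapP[u]; rewrite mem_enum => Bu ->; rewrite mem_iota /= precount_bound.
have precount_size : size (iota 0 #|B|) <= size (map precount (enum B)).
  by rewrite size_map size_iota -cardE.
have [_ precount_perm] := uniq_min_size precount_uniq precount_sub precount_size.
rewrite (perm_big _ (uniq_perm precount_uniq (iota_uniq 0 #|B|) precount_perm)) /=.
by rewrite -sum_ltn_minn /index_iota subn0.
Qed.

End RankInTotalOrder.

Lemma lexlt_irr : irreflexive lexlt.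
Proof. by elim=> [|a s IH] //=; rewrite ltnn eqxx. Qed.

Lemma lexlt_trans : transitive lexlt.
Proof.
move=> t s w; elim: s t w => [|a s IH] [|b t] [|c w] //=.
case/orP=> [h1|/andP[/eqP <- h1]]; case/orP=> [h2|/andP[/eqP e h2]].
- by rewrite (ltn_trans h1 h2).
- by rewrite -e h1.
- by rewrite h2.
- by rewrite e eqxx (IH _ _ h1 h2) orbT.
Qed.

Lemma lexlt_total s t : size s = size t -> s != t -> lexlt s t || lexlt t s.
Proof.
elim: s t => [|a s IH] [|b t] //= [e] ne.
case: (ltngtP (nat_of_ord a) (nat_of_ord b)) => h; rewrite ?orbT //=.
have ab : a = b by apply: val_inj.
rewrite -ab eqxx /= in ne *; apply: IH => //.
by apply: contra ne => /eqP ->.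
Qed.

Section Rank.
Local Open Scope nat_scope.

Lemma sum_ord_eq k j : \sum_(i < k) (j == i :> nat) = (j < k).
Proof.
elim: k => [|k IH]; first by rewrite big_ord0.
by rewrite big_ord_recr /= IH ltnS; case: ltngtP.
Qed.

Definition lexrank n k (u : seq letter) :=
  \sum_(v : n.-tuple letter) (admissible v && Kis v k && lexlt v u).

Lemma precedes_split k l n (u v : seq letter) :
  prob u = ((2 ^+ k)^-1)%R -> size v = l -> size u = n ->
  admissible v && precedes v u =
    \sum_(k' < k) (admissible v && Kis v k')
    + (admissible v && Kis v k && (l < n))
    + (admissible v && Kis v k && (l == n) && lexlt v u) :> nat.
Proof.
move=> hu <- <-; case: (boolP (admissible v)) => ha /=; last by rewrite big1.
have [j hj] := admissible_prob ha.
have -> : \sum_(k' < k) Kis v k' = \sum_(i < k) (j == i :> nat).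
  by apply: eq_bigr => i _; rewrite /Kis hj eq_invexp2.
rewrite sum_ord_eq /precedes /Kis hu hj lt_invexp2 !eq_invexp2.
by case: (ltngtP j k) => //= _; rewrite ?addn0 //=; case: ltngtP.
Qed.

Lemma sum_Ncount_widen k M : k < M -> \sum_(l < M) Ncount k l = Scount k.
Proof.
move=> h; rewrite /Scount (big_ord_widen M (Ncount k) h).
apply: esym; rewrite big_mkcond /=; apply: eq_bigr => i _.
by case: ltnP => // hi; rewrite Ncount_eq0 // ltnW.
Qed.

Lemma sum_Ncount_shorter n k M :
  0 < n -> n <= M -> \sum_(l < M) (l < n) * Ncount k l = Wlt n k.
Proof.
move=> h0 h.
have -> : Wlt n k = \sum_(l < n) Ncount k l.
  by rewrite /Wlt -(big_mkord xpredT) (@big_ltn _ _ _ 0 n) // Ncount0.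
rewrite (big_ord_widen M (Ncount k) h); apply: esym; rewrite big_mkcond /=.
by apply: eq_bigr => i _; case: (i < n); rewrite ?mul1n ?mul0n.
Qed.

Lemma rankE n (u : n.-tuple letter) k : 0 < n -> k <= 2 * n -> prob u = ((2 ^+ k)^-1)%R ->
  rank u = (\sum_(k' < k) Scount k' + Wlt n k + lexrank n k u).+1.
Proof.
move=> hn hk hu; rewrite /rank size_tuple; congr S.
rewrite (eq_bigr (fun l : 'I_(2 * n).+1 => \sum_(k' < k) Ncount k' l + (l < n) * Ncount k l
   + (l == n :> nat) * lexrank l k u)); last first.
  move=> l _; rewrite card_set_sumb.
  rewrite (eq_bigr _ (fun (v : l.-tuple letter) _ => precedes_split hu (size_tuple v) (size_tuple u))).
  rewrite !big_split /=; congr (_ + _ + _).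
  - by rewrite exchange_big /=; apply: eq_bigr => k' _; rewrite Ncount_sum.
  - rewrite Ncount_sum; case: (l < n); rewrite ?mul1n ?mul0n; last by rewrite big1 // => v; rewrite andbF.
    by apply: eq_bigr => v _; rewrite andbT.
  - case: (l == n :> nat); rewrite ?mul1n ?mul0n; last by rewrite big1 // => v; rewrite andbF.
    by apply: eq_bigr => v _; rewrite andbT.
rewrite !big_split /=; congr (_ + _ + _).
- by rewrite exchange_big /=; apply: eq_bigr => k' _; apply: sum_Ncount_widen; have := ltn_ord k'; lia.
- by rewrite (sum_Ncount_shorter k hn) //; lia.
- have hn2 : n < (2 * n).+1 by lia.
  rewrite (bigD1 (Ordinal hn2)) //= eqxx mul1n [X in _ + X = _]big1 ?addn0 // => l hl.
  suff -> : (l == n :> nat) = false by rewrite mul0n.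
  by apply/negbTE; apply: contra hl => /eqP h; apply/eqP; apply: val_inj.
Qed.

Lemma codelenE u : codelen u = trunc_log 2 (rank u).+1.
Proof. by rewrite /codelen /code /bin_code size_map size_iota. Qed.

Lemma Iev_rank n k (u : n.-tuple letter) : 0 < n -> 3 <= k -> k <= 2 * n ->
  prob u = ((2 ^+ k)^-1)%R -> Iev u = (Wlt n k + lexrank n k u < halfS (k - 2)).
Proof.
move=> hn hk3 hk hu.
rewrite /Iev /Kis hu eq_invexp2 codelenE (rankE hn hk hu).
have hT := sum_Scount_lt (ltnW hk3).
case: k hk3 hk hu hT => [|[|[|k]]] // _ _ _ hT.
have hS := halfS_add k.
rewrite subn2 /= in hT *.
have e3 : 2 ^ k.+3 = 2 * 2 ^ k.+2 by rewrite expnS.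
set T := \sum_(k' < k.+3) Scount k' in hT *.
set W := Wlt n k.+3; set L := lexrank n k.+3 u.
(* The lower bound 2^(k-1) <= rank + 1 always holds, as S_k / 2 <= 2^(k-1). *)
case: (ltnP (W + L) (halfS k.+1)) => h.
  by rewrite (@trunc_log_eq 2 k.+2) ?eqxx //; apply/andP; split; lia.
have : k.+3 <= trunc_log 2 (T + W + L).+2 by apply: trunc_log_max => //; lia.
by move=> h2; apply/negbTE/eqP; lia.
Qed.

Lemma card_Iev_level n k : 0 < n -> 3 <= k -> k <= 2 * n ->
  \sum_(u : n.-tuple letter) (admissible u && Kis u k && Iev u)
    = minn (halfS (k - 2) - Wlt n k) (Ncount k n).
Proof.
move=> hn hk3 hk.
pose B (v : n.-tuple letter) := admissible v && Kis v k.
pose r (v u : n.-tuple letter) := lexlt v u.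
have r_total x y : x != y -> r x y || r y x.
  move=> ne; apply: lexlt_total; first by rewrite !size_tuple.
  by apply: contra ne => /eqP h; apply/eqP; apply: val_inj.
have r_irr : irreflexive r by move=> x; apply: lexlt_irr.
have r_trans : transitive r by move=> x y z; apply: lexlt_trans.
have -> : Ncount k n = #|B| by apply: eq_card => v; rewrite inE.
rewrite -(count_rank_ltn B r_irr r_trans r_total); apply: eq_bigr => u _.
rewrite /B; case: (boolP (admissible u && Kis u k)) => //= /andP[ha /eqP hu].
by rewrite (Iev_rank hn hk3 hk hu) ltn_subRL addnC /lexrank addnC card_set_sumb.
Qed.

End Rank.

Lemma Xcnt_Kis n x (u : n.-tuple letter) : (0 < n)%N -> admissible u ->
  (Xcnt u == x) = Kis u (n + 1 + x).
Proof.
case: u => [[|a s] /= /eqP hs] // hn ha.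
have belast_take b t : belast b t = take (size t) (b :: t).
  by elim: t b => [|c t IH] b //=; rewrite IH.
rewrite /Kis probE ha eq_invexp2 /Xcnt /= -belast_take /pathexp -hs /=.
by apply/eqP/eqP; lia.
Qed.

Lemma Xcnt_ltn n (u : n.-tuple letter) : (0 < n)%N -> (Xcnt u < n)%N.
Proof.
move=> hn; rewrite /Xcnt; apply: (leq_ltn_trans (count_size _ _)).
by rewrite size_take size_tuple; case: n hn u => [|n] //= _ u; rewrite ltnS geq_minl.
Qed.

Lemma chainP_partition_Xcnt n (E : pred (n.-tuple letter)) : (0 < n)%N ->
  chainP n E = \sum_(x < n) chainP n (fun u => E u && (Xcnt u == x)).
Proof.
move=> hn; rewrite /chainP [RHS](exchange_big_dep E) /=; last by move=> x u _ /andP[].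
apply: eq_bigr => u Eu; rewrite (big_pred1 (Ordinal (Xcnt_ltn u hn))) // => x /=.
by rewrite Eu -val_eqE eq_sym.
Qed.

(* Every word with X = x has probability 2^-(n+1+x). *)
Lemma chainP_Xcnt n x (E : pred (n.-tuple letter)) : (0 < n)%N ->
  chainP n (fun u => E u && (Xcnt u == x)) =
  (\sum_(u : n.-tuple letter) (admissible u && Kis u (n + 1 + x) && E u))%N%:R
    * (2 ^+ (n + 1 + x))^-1.
Proof.
move=> hn; rewrite /chainP big_mkcond natr_sum mulr_suml /=.
apply: eq_bigr => u _.
case: (boolP (admissible u)) => ha /=; last by rewrite prob_not_admissible // mul0r; case: ifP.
rewrite (Xcnt_Kis x hn ha).
case hK: (Kis u (n + 1 + x)); last by rewrite andbF /= mul0r; case: (E u).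
by move: hK; rewrite andbT /Kis => /eqP ->; case: (E u); rewrite ?mul1r ?mul0r.
Qed.

Lemma chainP_Xcnt_eq n x : (0 < n)%N ->
  chainP n (fun u => Xcnt u == x) = (Ncount (n + 1 + x) n)%:R * (2 ^+ (n + 1 + x))^-1.
Proof.
move=> hn; rewrite (chainP_Xcnt x (fun _ => true) hn) Ncount_sum.
by congr (_%:R * _); apply: eq_bigr => u _; rewrite andbT.
Qed.

Lemma Ncount_level_gt0 n x : (0 < n)%N -> (x < n)%N -> (0 < Ncount (n + 1 + x) n)%N.
Proof. by move=> hn hx; rewrite Ncount_level // muln_gt0 expn_gt0 /= bin_gt0; lia. Qed.

Lemma chainP_Xcnt_binomial n x : (0 < n)%N -> (x < n)%N ->
  chainP n (fun u => Xcnt u == x) = 'C(n.-1, x)%:R * (2 ^+ n.-1)^-1.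
Proof.
move=> hn hx; rewrite chainP_Xcnt_eq // Ncount_level // natrM natrX.
have -> : (n + 1 + x = n.-1 + (x + 2))%N by lia.
by rewrite (exprD _ n.-1); field; rewrite !expf_neq0.
Qed.

Lemma minn_div_clip (h w N : nat) : (0 < N)%N ->
  (minn (h - w) N)%:R / N%:R = Num.min 1 (Num.max 0 ((h%:R - w%:R) / N%:R)) :> rat.
Proof.
move=> hN; have hN' : (0 : rat) < N%:R by rewrite ltr0n.
case: (leqP h w) => hw.
  have -> : (h - w = 0)%N by apply/eqP; rewrite subn_eq0.
  by rewrite min0n mul0r max_l ?min_r // ler_pdivrMr // mul0r subr_le0 ler_nat.
rewrite -natrB ?(ltnW hw) // max_r; last by rewrite divr_ge0.
case: (leqP (h - w) N) => hm.
  by rewrite min_r // ler_pdivrMr // mul1r ler_nat.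
by rewrite divff ?lt0r_neq0 // min_l // ler_pdivlMr // mul1r ler_nat ltnW.
Qed.

Lemma VnE n k : (1 < k)%N -> Vn n k = (halfS (k - 2))%:R - (Wlt n k)%:R.
Proof. by move=> hk; rewrite /Vn ScountE hk mul1n natrM mulrC mulKf. Qed.

Lemma gE n x : (2 <= n)%N -> (x < n)%N ->
  g n x = (minn (halfS (n + 1 + x - 2) - Wlt n (n + 1 + x)) (Ncount (n + 1 + x) n))%:R
          / (Ncount (n + 1 + x) n)%:R.
Proof.
move=> hn hx; have hn0 : (0 < n)%N by lia.
rewrite /g /condP (chainP_Xcnt x (fun u => Iev u) hn0) (chainP_Xcnt_eq x hn0).
rewrite card_Iev_level //; try lia.
by rewrite invfM invrK mulrA mulrAC divfK // expf_neq0.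
Qed.

Theorem mainTheorem8 (n : nat) (hn : (2 <= n)%N) :
  (forall x : nat, (x < n)%N ->
     g n x = Num.min 1 (Num.max 0 (Vn n (n + 1 + x) / (Ncount (n + 1 + x) n)%:R)))
  /\ chainP n (fun u => Iev u)
     = \sum_(x < n) ('C(n.-1, x))%:R * (2 ^+ n.-1)^-1 * g n x.
Proof.
have hn0 : (0 < n)%N by lia.
split=> [x hx|].
  by rewrite gE // VnE ?minn_div_clip ?Ncount_level_gt0 //; lia.
rewrite (chainP_partition_Xcnt _ hn0); apply: eq_bigr => x _.
have hNx : chainP n (fun u => Xcnt u == x) != 0.
  by rewrite chainP_Xcnt_eq // mulf_neq0 ?invr_neq0 ?expf_neq0 // pnatr_eq0 -lt0n Ncount_level_gt0.
by rewrite -chainP_Xcnt_binomial // /g /condP mulrC divfK.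
Qed.
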